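(* For integers $n>1$ and $m>1$, $\chi_{ld}(F_m[\overline{K_{n}}])=3$.
   Context: All graphs are finite, simple and undirected. For a graph $G=(V,E)$ of order $N$ without isolated vertices, a bijection $f\colon V\to\{1,2,\dots,N\}$ is a local distance antimagic labeling if $w(u)\neq w(v)$ for every edge $uv$, where $w(u)=\sum_{x\in N(u)}f(x)$ and $N(u)$ is the open neighborhood of $u$. $\chi_{ld}(G)$ is the minimum number of distinct weights over all local distance antimagic labelings of $G$. The friendship graph $F_m=mK_2+K_1$ consists of $m$ disjoint edges together with a central vertex adjacent to all $2m$ of their endpoints. $\overline{K_n}$ is the edgeless graph on $n$ vertices. The lexicographic product $G[H]$ has vertex set $V(G)\times V(H)$, with $(g,h)$ adjacent to $(g',h')$ iff $gg'\in E(G)$, or $g=g'$ and $hh'\in E(H)$. *)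

From mathcomp Require Import all_boot.
Set Implicit Arguments. Unset Strict Implicit. Unset Printing Implicit Defensive.

(* A simple graph on a finite vertex type T is a symmetric irreflexive rel. *)

Definition ld_weight (T : finType) (e : rel T) (f : T -> nat) (u : T) : nat :=
  \sum_(x : T | e u x) f x.

Definition is_labeling (T : finType) (f : T -> nat) : Prop :=
  injective f /\ (forall x, 1 <= f x <= #|T|).

Definition is_ld_antimagic (T : finType) (e : rel T) (f : T -> nat) : Prop :=
  is_labeling f /\ (forall u v, e u v -> ld_weight e f u != ld_weight e f v).

Definition num_weights (T : finType) (e : rel T) (f : T -> nat) : nat :=
  size (undup [seq ld_weight e f u | u <- enum T]).

Definition chi_ld_is (T : finType) (e : rel T) (k : nat) : Prop :=
  (exists f, is_ld_antimagic e f /\ num_weights e f = k) /\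
  (forall f, is_ld_antimagic e f -> k <= num_weights e f).

(* Friendship graph F_m = m K_2 + K_1: vertex None is the centre,
   Some (i, b) is endpoint b of the i-th edge. *)
Definition friendship_rel (m : nat) : rel (option ('I_m * bool)) :=
  fun x y => match x, y with
  | None, None => false
  | None, Some _ | Some _, None => true
  | Some (i, b), Some (j, c) => (i == j) && (b != c)
  end.

Definition edgeless_rel (n : nat) : rel 'I_n := fun _ _ => false.

Definition lex_rel (TG TH : finType) (eG : rel TG) (eH : rel TH) : rel (TG * TH) :=
  fun x y => eG x.1 y.1 || ((x.1 == y.1) && eH x.2 y.2).

Arguments friendship_rel m : clear implicits.
Arguments edgeless_rel n : clear implicits.

From mathcomp Require Import all_boot zify.
Set Implicit Arguments. Unset Strict Implicit.

(* Any three mutually adjacent vertices need three distinct weights, and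
   F_m[K_n-bar] contains triangles, so chi_ld >= 3.  Conversely, in G[K_n-bar]
   the weight of (g, j) only depends on the fibre sums S(g') = sum_j f(g', j)
   of the neighbours g' of g.  Fill an n x (2m+1) array, row j holding the
   labels j(2m+1)+1, ..., (j+1)(2m+1) in a suitable order, so that the column
   of the centre sums to X, the columns of one end of each K_2 to X + m and
   those of the other end to X - m.  Then all centre copies get weight 2mX and
   the leaf copies get 2X + m or 2X - m: three weights, adjacent ones distinct. *)

Lemma num_weights_ge3 (T : finType) (e : rel T) (f : T -> nat) (u v w : T) :
  is_ld_antimagic e f -> e u v -> e u w -> e v w -> 3 <= num_weights e f.
Proof.
move=> [_ antimagic] euv euw evw; rewrite /num_weights.
set wt := ld_weight e f.
apply: (@uniq_leq_size _ [:: wt u; wt v; wt w]).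
  by rewrite /= !inE negb_or !antimagic.
by move=> x; rewrite !inE mem_undup => /or3P [] /eqP ->; apply: map_f; rewrite mem_enum.
Qed.

Lemma num_weights_eq_size (T : finType) (e : rel T) (f : T -> nat) (s : seq nat) :
  uniq s -> s =i codom (ld_weight e f) -> num_weights e f = size s.
Proof.
move=> s_uniq s_codom; rewrite /num_weights -codomE; apply/perm_size/uniq_perm => //.
  exact: undup_uniq.
by move=> x; rewrite mem_undup s_codom.
Qed.

Definition fibre_sum (TG : finType) (n : nat) (f : TG * 'I_n -> nat) (g : TG) : nat :=
  \sum_(j < n) f (g, j).

Lemma ld_weight_lex_edgeless (TG : finType) (eG : rel TG) (n : nat)
    (f : TG * 'I_n -> nat) (g : TG) (j : 'I_n) :
  ld_weight (lex_rel eG (edgeless_rel n)) f (g, j) =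
  \sum_(g' | eG g g') fibre_sum f g'.
Proof.
rewrite /ld_weight /fibre_sum pair_big; apply: eq_big => -[x y] //=.
by rewrite /lex_rel /edgeless_rel andbF orbF andbT.
Qed.

Section RowLabel.

Variables (TG : finType) (n : nat) (code : TG -> nat) (sigma : nat -> nat -> nat).
Hypothesis code_inj : injective code.
Hypothesis code_lt : forall g, code g < #|TG|.
Hypothesis sigma_lt : forall j c, c < #|TG| -> sigma j c < #|TG|.
Hypothesis sigma_inj :
  forall j c c', c < #|TG| -> c' < #|TG| -> sigma j c = sigma j c' -> c = c'.

Definition row_label (u : TG * 'I_n) : nat := u.2 * #|TG| + sigma u.2 (code u.1) + 1.

Lemma row_label_inj : injective row_label.
Proof.
move=> [g j] [g' j']; rewrite /row_label /= => eq_label.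
have lt_sigma := sigma_lt j (code_lt g); have lt_sigma' := sigma_lt j' (code_lt g').
have k_gt0 : 0 < #|TG| by lia.
have eq_j : j = j'.
  apply: val_inj; move: (congr1 (fun x => x.-1 %/ #|TG|) eq_label) => /=.
  by rewrite !addn1 /= !divnMDl // !divn_small // !addn0.
subst j'; have /sigma_inj/code_inj-> // : sigma j (code g) = sigma j (code g') by lia.
Qed.

Lemma row_label_is_labeling : is_labeling row_label.
Proof.
split; first exact: row_label_inj.
move=> [g j]; rewrite card_prod card_ord mulnC /row_label /=; apply/andP; split; first lia.
apply: leq_trans (_ : j.+1 * #|TG| <= _); last by rewrite leq_mul2r ltn_ord orbT.
by rewrite mulSn addn1 [_ + sigma _ _]addnC ltn_add2r sigma_lt.
Qed.

Lemma fibre_sum_row_label (g : TG) :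
  fibre_sum row_label g = \sum_(j < n) (j * #|TG| + 1) + \sum_(j < n) sigma j (code g).
Proof. by rewrite -big_split; apply: eq_bigr => j _; rewrite /row_label /=; lia. Qed.

End RowLabel.

Section Rows.

Variable m : nat.

Definition swap_halves (c : nat) : nat :=
  if c < m then c + m else if c < 2 * m then c - m else 2 * m.

Definition mirror (c : nat) : nat := 2 * m - c.

Definition rotate (c : nat) : nat := if c < m then c + m + 1 else c - m.

Definition twist (c : nat) : nat := if c < m then 2 * m - 1 - 2 * c else 4 * m - 2 * c.

Definition alt_row (j c : nat) : nat := if odd j then mirror c else c.

(* Row 0 swaps the two halves, creating the imbalance of +-m between the two
   ends of each K_2; the other rows add up to nm - c.  For even n they are
   [mirror] followed by pairs {c, 2m - c}; for odd n they are [rotate] and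
   [twist], i.e. c |-> c + m + 1 and c |-> -2(c + 1) modulo 2m + 1, which add
   up to 3m - c, followed by such pairs. *)
Definition row (n j c : nat) : nat :=
  if j == 0 then swap_halves c
  else if odd n && (j == 1) then rotate c
  else if odd n && (j == 2) then twist c
  else alt_row j c.

Lemma row_le n j c : c <= 2 * m -> row n j c <= 2 * m.
Proof.
rewrite /row /swap_halves /rotate /twist /alt_row /mirror.
by repeat case: ifP; lia.
Qed.

Lemma row_inj n j c c' :
  c <= 2 * m -> c' <= 2 * m -> row n j c = row n j c' -> c = c'.
Proof.
rewrite /row /swap_halves /rotate /twist /alt_row /mirror.
by repeat case: ifP; lia.
Qed.

Lemma sum_alt_row s k c :
  c <= 2 * m -> \sum_(s <= j < s + 2 * k) alt_row j c = k * (2 * m).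
Proof.
move=> le_c; elim: k => [|k IHk]; first by rewrite addn0 big_geq.
rewrite (_ : s + 2 * k.+1 = (s + 2 * k).+2); last lia.
rewrite big_nat_recr /=; last lia.
rewrite big_nat_recr /=; last lia.
by rewrite IHk /alt_row /mirror /=; case: (odd (s + 2 * k)) => /=; lia.
Qed.

Lemma sum_head_rows n c :
  c <= 2 * m -> \sum_(0 <= j < 2 + odd n) row n j c + c = (2 + odd n) * m + swap_halves c.
Proof.
move=> le_c; rewrite /row /swap_halves /rotate /twist /alt_row /mirror.
by case: (odd n); rewrite !big_nat_recr //= big_geq //=; repeat case: ifP; lia.
Qed.

Lemma sum_rows n c :
  1 < n -> c <= 2 * m -> \sum_(j < n) row n j c + c = n * m + swap_halves c.
Proof.
move=> n_gt1 le_c; set k := n./2 - 1.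
have def_n : n = 2 + odd n + 2 * k by have := odd_double_half n; rewrite -muln2; lia.
rewrite -(big_mkord xpredT (fun j => row n j c)) {1}def_n.
rewrite (big_cat_nat _ (n := 2 + odd n)) //=; last lia.
rewrite (@eq_big_nat _ _ _ (2 + odd n) _ _ (fun j => alt_row j c)); last first.
  move=> j /andP [le_j _]; rewrite /row.
  by case: (odd n) in le_j *; rewrite /=; repeat case: eqP => //=; lia.
rewrite sum_alt_row // addnAC sum_head_rows //; lia.
Qed.

End Rows.

Section FriendshipLabel.

Variables n m : nat.
Hypothesis n_gt1 : 1 < n.
Hypothesis m_gt0 : 0 < m.

Local Notation vertex := (option ('I_m * bool)).
Local Notation G := (lex_rel (friendship_rel m) (edgeless_rel n)).

Lemma card_friendship : #|{: vertex}| = (2 * m).+1.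
Proof. by rewrite card_option card_prod card_ord card_bool; lia. Qed.

Lemma friendship_leaf_sum i b (F : vertex -> nat) :
  \sum_(g | friendship_rel m (Some (i, b)) g) F g = F None + F (Some (i, ~~ b)).
Proof.
rewrite (bigD1 None) //=; congr (_ + _); apply: big_pred1 => -[[j c]|] //=.
rewrite andbT; apply/andP/eqP => [[/eqP-> neq_bc]|[-> ->]].
  by move: neq_bc; case: b; case: c.
by case: b.
Qed.

Lemma friendship_centre_sum (F : vertex -> nat) :
  \sum_(g | friendship_rel m None g) F g =
  \sum_(i < m) (F (Some (i, true)) + F (Some (i, false))).
Proof.
rewrite (reindex_omap Some id) //=; last by case.
rewrite (eq_bigr (fun i => \sum_b F (Some (i, b)))) => [|i _]; last by rewrite big_bool.
by rewrite pair_big; apply: eq_big => -[i b] //=; rewrite eqxx.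
Qed.

Definition friendship_code (g : vertex) : nat :=
  match g with None => 2 * m | Some (i, b) => if b then m + i else i end.

Lemma friendship_code_lt g : friendship_code g < #|{: vertex}|.
Proof. by rewrite card_friendship; case: g => [[i []]|] //=; have := ltn_ord i; lia. Qed.

Lemma friendship_code_inj : injective friendship_code.
Proof.
move=> [[i b]|] [[i' b']|] //=.
- move=> eq_code; have lt_i := ltn_ord i; have lt_i' := ltn_ord i'.
  have eq_b : b = b' by move: eq_code; case: b; case: b' => //= eq_code; lia.
  by subst b'; congr (Some (_, _)); apply: val_inj; move: eq_code; case: b => /=; lia.
- by have := ltn_ord i; case: b; lia.
- by have := ltn_ord i'; case: b'; lia.
Qed.

Definition friendship_label : vertex * 'I_n -> nat :=
  row_label friendship_code (row m n).

Lemma friendship_row_lt j c : c < #|{: vertex}| -> row m n j c < #|{: vertex}|.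
Proof. by rewrite card_friendship !ltnS; apply: row_le. Qed.

Lemma friendship_row_inj j c c' :
  c < #|{: vertex}| -> c' < #|{: vertex}| -> row m n j c = row m n j c' -> c = c'.
Proof. by rewrite card_friendship !ltnS; apply: row_inj. Qed.

Definition centre_sum : nat := \sum_(j < n) (j * #|{: vertex}| + 1) + n * m.

Lemma lt_2m_centre_sum : 2 * m < centre_sum.
Proof. by rewrite /centre_sum (bigD1 (Ordinal (ltnW n_gt1))) //=; nia. Qed.

Lemma fibre_sum_friendship_label g :
  fibre_sum friendship_label g =
  match g with
  | None => centre_sum
  | Some (_, b) => if b then centre_sum - m else centre_sum + m
  end.
Proof.
rewrite fibre_sum_row_label /centre_sum.
have le_code : friendship_code g <= 2 * m by rewrite -ltnS -card_friendship friendship_code_lt.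
have := sum_rows n_gt1 le_code; rewrite /swap_halves.
case: g => [[i b]|] /= in le_code *; last by repeat case: ifP; lia.
by have := ltn_ord i; case: b in le_code *; repeat case: ifP; lia.
Qed.

Lemma ld_weight_friendship_label g j :
  ld_weight G friendship_label (g, j) =
  match g with
  | None => m * (2 * centre_sum)
  | Some (_, b) => if b then 2 * centre_sum + m else 2 * centre_sum - m
  end.
Proof.
rewrite ld_weight_lex_edgeless; case: g => [[i b]|].
  rewrite friendship_leaf_sum !fibre_sum_friendship_label.
  by have := lt_2m_centre_sum; case: b => /=; lia.
rewrite (friendship_centre_sum (fibre_sum friendship_label)).
rewrite (eq_bigr (fun _ => 2 * centre_sum)).
  by rewrite sum_nat_const card_ord.
by move=> i _; rewrite !fibre_sum_friendship_label; have := lt_2m_centre_sum; lia.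
Qed.

Lemma friendship_label_antimagic : is_ld_antimagic G friendship_label.
Proof.
split.
  apply: row_label_is_labeling;
    [exact: friendship_code_inj | exact: friendship_code_lt
    | exact: friendship_row_lt | exact: friendship_row_inj].
have := lt_2m_centre_sum => lt_m_X.
move=> [g j] [g' j']; rewrite !ld_weight_friendship_label /lex_rel /edgeless_rel andbF orbF /=.
by case: g => [[i []]|]; case: g' => [[i' []]|]; rewrite //= ?andbF // => _; apply/eqP; nia.
Qed.

Lemma num_weights_friendship_label : num_weights G friendship_label = 3.
Proof.
pose i0 : 'I_m := Ordinal m_gt0; pose j0 : 'I_n := Ordinal (ltnW n_gt1).
have := lt_2m_centre_sum => lt_m_X.
apply: (num_weights_eq_size (s := [:: m * (2 * centre_sum);
  2 * centre_sum + m; 2 * centre_sum - m])).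
  by rewrite /= !inE !negb_or !andbT; nia.
move=> x; rewrite !inE; apply/idP/codomP => [|[[g j] ->]]; last first.
  by rewrite ld_weight_friendship_label; case: g => [[i []]|]; rewrite eqxx ?orbT.
case/or3P => /eqP ->;
  [exists (None, j0) | exists (Some (i0, true), j0) | exists (Some (i0, false), j0)];
  by rewrite ld_weight_friendship_label.
Qed.

End FriendshipLabel.

Theorem mainTheorem20 (n m : nat) (hn : 1 < n) (hm : 1 < m) :
  chi_ld_is (lex_rel (friendship_rel m) (edgeless_rel n)) 3.
Proof.
split.
  exists (@friendship_label n m); split.
    exact: friendship_label_antimagic hn (ltnW hm).
  exact: num_weights_friendship_label hn (ltnW hm).
move=> f antimagic_f.
pose i0 : 'I_m := Ordinal (ltnW hm); pose j0 : 'I_n := Ordinal (ltnW hn).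
by apply: (num_weights_ge3 (u := (None, j0)) (v := (Some (i0, false), j0))
                           (w := (Some (i0, true), j0)) antimagic_f).
Qed.
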